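(* Let $J_j(x)=\tfrac{c_j}{2}x^2+\bar c_jx$ with $c_j>0$, and let $\rho>0$. Consider the system in the variables $z=(\hat q,\tilde\theta)\in\mathbb{R}^n\times\mathbb{R}^{|\mathcal E|}$ and $\sigma=(\lambda,\omega,\alpha,\eta)\in\mathbb{R}\times\mathbb{R}^n\times\mathbb{R}^n\times\mathbb{R}^{2|\mathcal E|}$, with $\pi:=\lambda\mathbf 1-H\eta-\omega$ and $q:=\tfrac1\rho(\pi-\alpha)+\hat q$: \[ \dot{\tilde\theta}=C^T\omega,\qquad M\dot\omega=q-d-D\omega-CB\tilde\theta, \] \[ \tau^\alpha_j\dot\alpha_j=q_j-\frac{\pi_j-\bar c_j}{c_j}\ (j=1,\dots,n),\qquad T^{\hat q}\dot{\hat q}=\pi-\alpha, \] \[ T^\lambda\dot\lambda=-\mathbf 1^T(q-d),\qquad T^\eta\dot\eta=\big[H^T(q-d)-F\big]^+_\eta, \] with initial points satisfying $\eta(0)\ge0$. Then a point $(z^*,\sigma^* )$ (with $\eta^*\ge0$) is an equilibrium of this system if and only if, setting $p^*_j:=(\pi^*_j-\bar c_j)/c_j$ with $\pi^*=\lambda^*\mathbf 1-H\eta^*-\omega^*$, $q^*:=\tfrac1\rho(\pi^*-\alpha^* )+\hat q^*$ and $\nu^*:=\omega^*$, the tuple $(p^*,q^*,\omega^*,\tilde\theta^*,\alpha^*,\lambda^*,\eta^*,\nu^* )$ is an optimal primal-dual solution of the planner's problem \[ \min_{p,q,\omega\in\mathbb{R}^n,\,\tilde\theta\in\mathbb{R}^{|\mathcal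 E|}}\ \sum_jJ_j(p_j)+\tfrac12\omega^TD\omega \] subject to $q=p$ (multiplier $\alpha$), $\mathbf 1^T(q-d)=0$ (multiplier $\lambda$), $H^T(q-d)\le F$ (multiplier $\eta\ge0$), $q-d-D\omega-CB\tilde\theta=0$ (multiplier $\nu$).
   Context: $(\mathcal N,\mathcal E)$ is a connected directed graph with $\mathcal N=\{1,\dots,n\}$; $C$ is its incidence matrix ($C_{j,e}=1$ if $e=(j,k)$, $-1$ if $e=(k,j)$, $0$ otherwise). $B$, $D$, $M$ are diagonal with positive diagonal entries; $T^{\hat q},T^\lambda,T^\eta$ are diagonal (or positive scalar) with positive entries, and $\tau^\alpha_j>0$. $L:=CBC^T$, $H\in\mathbb{R}^{n\times2|\mathcal E|}$ with $H^T=\begin{bmatrix} BC^TL^\dagger\\ -BC^TL^\dagger\end{bmatrix}$ ($L^\dagger$ Moore–Penrose inverse), $F=\begin{bmatrix}\overline F\\-\underline F\end{bmatrix}$, $d\in\mathbb{R}^n$ given. Projection: for vectors $y,u$, $([y]^+_u)_e=y_e$ if $y_e>0$ or $u_e>0$, and $0$ otherwise. Optimal primal-dual solutions are with respect to the Lagrangian $\sum_jJ_j(p_j)+\tfrac12\omega^TD\omega+\nu^T(q-d-D\omega-CB\tilde\theta)+\alpha^T(q-p)-\lambda\mathbf 1^T(q-d)+\eta^T(H^T(q-d)-F)$. (The system models linearized swing dynamics, generators' price-bid updates comparing dispatch with their profit-maximizing output at price $\pi$, and regularized market dispatch/pricing with virtual dispatch $\hat q$.) *)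

From HB Require Import structures.
From mathcomp Require Import all_boot all_order all_algebra.
Set Implicit Arguments. Unset Strict Implicit. Unset Printing Implicit Defensive.
Import Order.TTheory GRing.Theory Num.Theory.
Local Open Scope ring_scope.

Definition incidence (R : pzRingType) (n m : nat) (src dst : 'I_m -> 'I_n) : 'M[R]_(n, m) :=
  \matrix_(j, e) (if src e == j then 1 else if dst e == j then -1 else 0).

Definition adj (n m : nat) (src dst : 'I_m -> 'I_n) : rel 'I_n :=
  fun j k => [exists e, ((src e == j) && (dst e == k)) || ((src e == k) && (dst e == j))].

Definition graph_connected (n m : nat) (src dst : 'I_m -> 'I_n) : Prop :=
  forall j k : 'I_n, connect (adj src dst) j k.

Definition diagm (R : pzRingType) (k : nat) (v : 'I_k -> R) : 'M[R]_k :=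
  diag_mx (\row_i v i).

Definition is_MP_inverse (R : pzRingType) (k : nat) (A X : 'M[R]_k) : Prop :=
  [/\ A *m X *m A = A, X *m A *m X = X, (A *m X)^T = A *m X & (X *m A)^T = X *m A].

Definition Hmat (R : pzRingType) (n m : nat) (C : 'M[R]_(n, m)) (b : 'I_m -> R)
  (Ldag : 'M[R]_n) : 'M[R]_(n, m + m) :=
  (col_mx (diagm b *m C^T *m Ldag) (- (diagm b *m C^T *m Ldag)))^T.

Definition onev (R : pzRingType) (k : nat) : 'cV[R]_k := const_mx 1.

Definition dotv (R : pzRingType) (k : nat) (u v : 'cV[R]_k) : R := \sum_i u i 0 * v i 0.

Definition sumv (R : pzRingType) (k : nat) (u : 'cV[R]_k) : R := \sum_i u i 0.

Definition projp (R : numDomainType) (k : nat) (y u : 'cV[R]_k) : 'cV[R]_k :=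
  \col_e (if (0 < y e 0) || (0 < u e 0) then y e 0 else 0).

Definition nonnegv (R : numDomainType) (k : nat) (u : 'cV[R]_k) : Prop :=
  forall i, 0 <= u i 0.

Definition price_of (R : pzRingType) (n m : nat) (H : 'M[R]_(n, m + m))
  (lam : R) (eta : 'cV[R]_(m + m)) (omega : 'cV[R]_n) : 'cV[R]_n :=
  lam *: onev R n - H *m eta - omega.

Definition q_of (R : fieldType) (n : nat) (rho : R) (pi alpha qhat : 'cV[R]_n) : 'cV[R]_n :=
  rho^-1 *: (pi - alpha) + qhat.

Definition is_equilibrium (R : realFieldType) (n m : nat)
  (C : 'M[R]_(n, m)) (b : 'I_m -> R) (dd mm : 'I_n -> R) (H : 'M[R]_(n, m + m))
  (c cbar : 'I_n -> R) (rho : R)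
  (tq tau : 'I_n -> R) (tl : R) (te : 'I_(m + m) -> R)
  (d : 'cV[R]_n) (F : 'cV[R]_(m + m))
  (qhat : 'cV[R]_n) (theta : 'cV[R]_m)
  (lam : R) (omega alpha : 'cV[R]_n) (eta : 'cV[R]_(m + m)) : Prop :=
  let pi := price_of H lam eta omega in
  let q := q_of rho pi alpha qhat in
  let thetadot : 'cV[R]_m := C^T *m omega in
  let omegadot : 'cV[R]_n :=
    \col_j ((q - d - diagm dd *m omega - C *m diagm b *m theta) j 0 / mm j) in
  let alphadot : 'cV[R]_n :=
    \col_j ((q j 0 - (pi j 0 - cbar j) / c j) / tau j) in
  let qhatdot : 'cV[R]_n := \col_j ((pi - alpha) j 0 / tq j) in
  let lamdot : R := - sumv (q - d) / tl in
  let etadot : 'cV[R]_(m + m) :=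
    \col_e ((projp (H^T *m (q - d) - F) eta) e 0 / te e) in
  [/\ thetadot = 0, omegadot = 0, alphadot = 0, qhatdot = 0 & (lamdot = 0 /\ etadot = 0)].

Definition Lagr (R : realFieldType) (n m : nat)
  (C : 'M[R]_(n, m)) (b : 'I_m -> R) (dd : 'I_n -> R) (H : 'M[R]_(n, m + m))
  (c cbar : 'I_n -> R) (d : 'cV[R]_n) (F : 'cV[R]_(m + m))
  (p q omega : 'cV[R]_n) (theta : 'cV[R]_m)
  (alpha : 'cV[R]_n) (lam : R) (eta : 'cV[R]_(m + m)) (nu : 'cV[R]_n) : R :=
  \sum_j (c j / 2 * p j 0 ^+ 2 + cbar j * p j 0)
  + 1 / 2 * dotv omega (diagm dd *m omega)
  + dotv nu (q - d - diagm dd *m omega - C *m diagm b *m theta)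
  + dotv alpha (q - p)
  - lam * sumv (q - d)
  + dotv eta (H^T *m (q - d) - F).

(* Optimal primal-dual solution = saddle point of the Lagrangian, with the
   multiplier eta of the inequality constraint nonnegative. *)
Definition optimal_primal_dual (R : realFieldType) (n m : nat)
  (C : 'M[R]_(n, m)) (b : 'I_m -> R) (dd : 'I_n -> R) (H : 'M[R]_(n, m + m))
  (c cbar : 'I_n -> R) (d : 'cV[R]_n) (F : 'cV[R]_(m + m))
  (p q omega : 'cV[R]_n) (theta : 'cV[R]_m)
  (alpha : 'cV[R]_n) (lam : R) (eta : 'cV[R]_(m + m)) (nu : 'cV[R]_n) : Prop :=
  let L := Lagr C b dd H c cbar d F in
  [/\ nonnegv eta,
      (forall (p' q' omega' : 'cV[R]_n) (theta' : 'cV[R]_m),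
          L p q omega theta alpha lam eta nu <= L p' q' omega' theta' alpha lam eta nu)
    & (forall (alpha' : 'cV[R]_n) (lam' : R) (eta' : 'cV[R]_(m + m)) (nu' : 'cV[R]_n),
          nonnegv eta' ->
          L p q omega theta alpha' lam' eta' nu' <= L p q omega theta alpha lam eta nu)].

From HB Require Import structures.
From mathcomp Require Import all_boot all_order all_algebra.
From mathcomp Require Import ring lra.
Import Order.TTheory GRing.Theory Num.Theory.
Set Implicit Arguments. Unset Strict Implicit. Unset Printing Implicit Defensive.
Local Open Scope ring_scope.

(* Both sides are equivalent to the KKT conditions of the planner's problem.
   The Lagrangian separates in the primal variables into two positive-definite
   diagonal quadratics (in p and omega) and two linear forms (in q and theta),
   so it is minimal in the primal variables exactly when its gradient there
   vanishes; it is affine in the multipliers, so it is maximal over them exactly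
   under primal feasibility and complementary slackness.  At an equilibrium each
   right-hand side, divided by its nonzero time constant, states one of these
   conditions; in particular [T^eta]^-1 [y]^+_eta = 0 with eta >= 0 is
   complementary slackness for y = H^T (q - d) - F. *)

Section DotProduct.
Variable R : comPzRingType.

Lemma dotvE k (u v : 'cV[R]_k) : dotv u v = (u^T *m v) 0 0.
Proof. by rewrite /dotv mxE; apply: eq_bigr => i _; rewrite mxE. Qed.

Lemma dotvC k (u v : 'cV[R]_k) : dotv u v = dotv v u.
Proof. by apply: eq_bigr => i _; rewrite mulrC. Qed.

Lemma dotvDl k (u v w : 'cV[R]_k) : dotv (u + v) w = dotv u w + dotv v w.
Proof. by rewrite /dotv -big_split; apply: eq_bigr => i _; rewrite mxE mulrDl. Qed.

Lemma dotvNl k (u v : 'cV[R]_k) : dotv (- u) v = - dotv u v.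
Proof. by rewrite /dotv -sumrN; apply: eq_bigr => i _; rewrite mxE mulNr. Qed.

Lemma dotvBl k (u v w : 'cV[R]_k) : dotv (u - v) w = dotv u w - dotv v w.
Proof. by rewrite dotvDl dotvNl. Qed.

Lemma dotvZl k a (u v : 'cV[R]_k) : dotv (a *: u) v = a * dotv u v.
Proof. by rewrite /dotv mulr_sumr; apply: eq_bigr => i _; rewrite mxE mulrA. Qed.

Lemma dotvBr k (u v w : 'cV[R]_k) : dotv u (v - w) = dotv u v - dotv u w.
Proof. by rewrite dotvC dotvBl !(dotvC u). Qed.

Lemma dotv0l k (v : 'cV[R]_k) : dotv 0 v = 0.
Proof. by rewrite /dotv big1 // => i _; rewrite mxE mul0r. Qed.

Lemma dotv0r k (u : 'cV[R]_k) : dotv u 0 = 0.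
Proof. by rewrite dotvC dotv0l. Qed.

Lemma dotv_mulmxr k l (A : 'M[R]_(k, l)) (u : 'cV[R]_k) (x : 'cV[R]_l) :
  dotv u (A *m x) = dotv (A^T *m u) x.
Proof. by rewrite !dotvE trmx_mul trmxK mulmxA. Qed.

Lemma sumvE k (u : 'cV[R]_k) : sumv u = dotv (onev R k) u.
Proof. by apply: eq_bigr => i _; rewrite mxE mul1r. Qed.

Lemma dotv_deltal k (e : 'I_k) (v : 'cV[R]_k) : dotv (delta_mx e 0) v = v e 0.
Proof.
rewrite /dotv (bigD1 e) //= big1 => [|i /negbTE ne]; rewrite !mxE ?eqxx ?ne /=.
  by rewrite mul1r addr0.
by rewrite mul0r.
Qed.

End DotProduct.

Lemma diagmE (R : pzRingType) k (a : 'I_k -> R) (v : 'cV[R]_k) i :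
  (diagm a *m v) i 0 = a i * v i 0.
Proof. by rewrite /diagm mul_diag_mx !mxE. Qed.

Lemma cV_eq0P (R : pzRingType) k (u : 'cV[R]_k) : u = 0 <-> forall j, u j 0 = 0.
Proof.
split => [-> j | h]; first by rewrite mxE.
by apply/matrixP => i j; rewrite (ord1 j) h mxE.
Qed.

Lemma subr_eq0P (V : zmodType) (u v : V) : u - v = 0 <-> u = v.
Proof. by split => [/subr0_eq | ->]; last exact: subrr. Qed.

Lemma col_div_eq0 (R : fieldType) k (u : 'cV[R]_k) (t : 'I_k -> R) :
  (forall j, t j != 0) -> \col_j (u j 0 / t j) = 0 <-> u = 0.
Proof.
move=> t_neq0; rewrite !cV_eq0P; split => h j; last by rewrite mxE h mul0r.
by have /eqP := h j; rewrite mxE mulf_eq0 invr_eq0 (negbTE (t_neq0 j)) orbF => /eqP.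
Qed.

Lemma diagm_mul_eq0 (R : idomainType) k (a : 'I_k -> R) (v : 'cV[R]_k) :
  (forall j, a j != 0) -> diagm a *m v = 0 <-> v = 0.
Proof.
move=> a_neq0; rewrite !cV_eq0P; split => h j; move: (h j); rewrite diagmE.
  by move/eqP; rewrite mulf_eq0 (negbTE (a_neq0 j)) => /eqP.
by move=> ->; rewrite mulr0.
Qed.

Section OrderedDotProduct.
Variables (R : realDomainType) (k : nat).
Implicit Types (u g x y : 'cV[R]_k).

Lemma dotvv_le0 u : (dotv u u <= 0) = (u == 0).
Proof.
apply/idP/eqP => [u_le0 | ->]; last by rewrite dotv0l.
have sq_ge0 i : predT i -> 0 <= u i 0 * u i 0 by rewrite -expr2 sqr_ge0.
have /psumr_eq0P u0 : dotv u u = 0 by apply/le_anti; rewrite u_le0 sumr_ge0.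
apply/cV_eq0P => i; have /eqP := u0 sq_ge0 i isT.
by rewrite mulf_eq0 orbb => /eqP.
Qed.

Lemma dotv_minP g x : (forall x', dotv x g <= dotv x' g) <-> g = 0.
Proof.
split => [min_x | -> x']; last by rewrite !dotv0r.
by apply/eqP; rewrite -dotvv_le0; have := min_x (x - g); rewrite dotvBl; lra.
Qed.

Lemma dotv_maxP g x : (forall x', dotv x' g <= dotv x g) <-> g = 0.
Proof.
split => [max_x | -> x']; last by rewrite !dotv0r.
by apply/eqP; rewrite -dotvv_le0; have := max_x (x + g); rewrite dotvDl; lra.
Qed.

Definition complementary (y u : 'cV[R]_k) : Prop :=
  forall e, y e 0 <= 0 /\ u e 0 * y e 0 = 0.

Lemma nonneg_dotv_maxP y u : nonnegv u ->
  (forall u', nonnegv u' -> dotv u' y <= dotv u y) <-> complementary y u.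
Proof.
move=> u_ge0; split => [max_u | cs u' u'_ge0].
- have y_le0 e : y e 0 <= 0.
    have u'_ge0 : nonnegv (u + delta_mx e 0).
      by move=> i; rewrite !mxE addr_ge0 // ler0n.
    by have := max_u _ u'_ge0; rewrite dotvDl dotv_deltal; lra.
  have uy_le0 i : predT i -> 0 <= - (u i 0 * y i 0).
    by move=> _; rewrite oppr_ge0 mulr_ge0_le0.
  have uy_ge0 : 0 <= dotv u y.
    have zero_ge0 : nonnegv (0 : 'cV[R]_k) by move=> i; rewrite mxE.
    by have := max_u 0 zero_ge0; rewrite dotv0l.
  have /psumr_eq0P uy0 : \sum_i - (u i 0 * y i 0) = 0.
    by apply/le_anti; rewrite sumr_ge0 // andbT sumrN oppr_le0.
  by move=> e; split=> //; apply/oppr_inj; rewrite oppr0 (uy0 uy_le0 e).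
- have <- : 0 = dotv u y by rewrite /dotv big1 // => i _; case: (cs i).
  by rewrite sumr_le0 // => i _; rewrite mulr_ge0_le0 //; case: (cs i).
Qed.

Lemma projp_eq0P y u : nonnegv u -> projp y u = 0 <-> complementary y u.
Proof.
move=> u_ge0; rewrite cV_eq0P; split => h e; move: (h e); rewrite /projp mxE.
  case: ifP => [_ -> | /negbT]; first by rewrite lexx mulr0.
  rewrite negb_or -!leNgt => /andP [y_le0 u_le0] _.
  have -> : u e 0 = 0 by apply/le_anti; rewrite u_le0 u_ge0.
  by rewrite mul0r.
case=> y_le0 /eqP; rewrite mulf_eq0 => /orP[/eqP u0 | /eqP y0].
  by rewrite u0 ltxx ltNge y_le0.
by rewrite y0 if_same.
Qed.

End OrderedDotProduct.

Section SeparableQuadratic.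
Variables (R : realFieldType) (k : nat) (w a : 'I_k -> R).
Hypothesis w_gt0 : forall j, 0 < w j.

Definition sep_quad (x : 'cV[R]_k) : R := \sum_j (w j / 2 * x j 0 ^+ 2 - a j * x j 0).

Lemma sep_quadB (x x' : 'cV[R]_k) : (forall j, w j * x j 0 = a j) ->
  sep_quad x' - sep_quad x = \sum_j w j / 2 * (x' j 0 - x j 0) ^+ 2.
Proof.
by move=> hx; rewrite /sep_quad -sumrB; apply: eq_bigr => j _; rewrite -hx; field.
Qed.

Lemma sep_quad_minP (x : 'cV[R]_k) :
  (forall x', sep_quad x <= sep_quad x') <-> (forall j, w j * x j 0 = a j).
Proof.
have term_ge0 (y z : 'cV[R]_k) j : 0 <= w j / 2 * (y j 0 - z j 0) ^+ 2.
  by rewrite mulr_ge0 ?sqr_ge0 // divr_ge0 // ltW.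
split => [min_x | hx x']; last first.
  by rewrite -subr_ge0 sep_quadB //; apply: sumr_ge0 => j _; apply: term_ge0.
pose xs : 'cV[R]_k := \col_j (a j / w j).
have hxs j : w j * xs j 0 = a j by rewrite mxE mulrC divfK ?gt_eqF.
have /psumr_eq0P x_xs : \sum_j w j / 2 * (x j 0 - xs j 0) ^+ 2 = 0.
  apply/le_anti/andP; split; first by rewrite -sep_quadB // subr_le0 min_x.
  by apply: sumr_ge0 => j _; apply: term_ge0.
move=> j; have /eqP := x_xs (fun j _ => term_ge0 x xs j) j isT.
rewrite mulf_eq0 sqrf_eq0 subr_eq0 mulf_eq0 invr_eq0 pnatr_eq0 orbF gt_eqF //=.
by move/eqP ->.
Qed.

End SeparableQuadratic.

Section Planner.
Variables (R : realFieldType) (n m : nat) (C : 'M[R]_(n, m)) (b : 'I_m -> R).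
Variables (dd c cbar : 'I_n -> R) (H : 'M[R]_(n, m + m)) (d : 'cV[R]_n) (F : 'cV[R]_(m + m)).
Hypotheses (b_gt0 : forall e, 0 < b e) (dd_gt0 : forall j, 0 < dd j).
Hypothesis c_gt0 : forall j, 0 < c j.

Local Notation L := (Lagr C b dd H c cbar d F).

(* The gradient of the Lagrangian in p, q, omega and theta vanishes; in the last
   condition the positive diagonal B has been cancelled from B C^T nu = 0. *)
Definition kkt_stationary (p omega alpha : 'cV[R]_n) (lam : R) (eta : 'cV[R]_(m + m))
    (nu : 'cV[R]_n) : Prop :=
  [/\ forall j, c j * p j 0 = alpha j 0 - cbar j, alpha = price_of H lam eta nu,
      omega = nu & C^T *m nu = 0].

Definition kkt_feasible (p q omega : 'cV[R]_n) (theta : 'cV[R]_m)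
    (eta : 'cV[R]_(m + m)) : Prop :=
  [/\ q = p, q - d - diagm dd *m omega - C *m diagm b *m theta = 0,
      sumv (q - d) = 0 & complementary (H^T *m (q - d) - F) eta].

Lemma Lagr_primalE p q omega theta alpha lam eta nu :
  L p q omega theta alpha lam eta nu =
    sep_quad c (fun j => alpha j 0 - cbar j) p + sep_quad dd (fun j => dd j * nu j 0) omega
    + dotv q (alpha - price_of H lam eta nu) - dotv theta (diagm b *m (C^T *m nu))
    + (lam * sumv d - dotv nu d - dotv (H *m eta) d - dotv eta F).
Proof.
have -> : sep_quad c (fun j => alpha j 0 - cbar j) p =
    \sum_j (c j / 2 * p j 0 ^+ 2 + cbar j * p j 0) - dotv alpha p.
  by rewrite /sep_quad /dotv -sumrB; apply: eq_bigr => j _; ring.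
have -> : sep_quad dd (fun j => dd j * nu j 0) omega =
    1 / 2 * dotv omega (diagm dd *m omega) - dotv nu (diagm dd *m omega).
  by rewrite /sep_quad /dotv mulr_sumr -sumrB; apply: eq_bigr => j _; rewrite !diagmE; ring.
have -> : dotv theta (diagm b *m (C^T *m nu)) = dotv nu (C *m diagm b *m theta).
  by rewrite [RHS]dotv_mulmxr trmx_mul /diagm tr_diag_mx -mulmxA dotvC.
rewrite /Lagr /price_of !sumvE !mulmxBr !dotvBr.
rewrite !(dotv_mulmxr H^T) trmxK !(dotvC q) dotvZl.
lra.
Qed.

Lemma Lagr_primal_minP p q omega theta alpha lam eta nu :
  (forall p' q' omega' theta',
      L p q omega theta alpha lam eta nu <= L p' q' omega' theta' alpha lam eta nu)
  <-> kkt_stationary p omega alpha lam eta nu.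
Proof.
have b_neq0 e : b e != 0 := lt0r_neq0 (b_gt0 e).
have dd_omega_eq : (forall j, dd j * omega j 0 = dd j * nu j 0) <-> omega = nu.
  split => [h | -> //]; apply/matrixP => i j; rewrite (ord1 j).
  by apply: (mulfI (lt0r_neq0 (dd_gt0 i))); apply: h.
split => [min_L | ].
- split.
  + apply/(sep_quad_minP _ c_gt0) => p'.
    by have := min_L p' q omega theta; rewrite !Lagr_primalE; lra.
  + apply/subr_eq0P/(dotv_minP _ q) => q'.
    by have := min_L p q' omega theta; rewrite !Lagr_primalE; lra.
  + apply/dd_omega_eq/(sep_quad_minP _ dd_gt0) => omega'.
    by have := min_L p q omega' theta; rewrite !Lagr_primalE; lra.
  + apply/(diagm_mul_eq0 _ b_neq0)/(dotv_maxP _ theta) => theta'.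
    by have := min_L p q omega theta'; rewrite !Lagr_primalE; lra.
- case=> [min_p /subr_eq0P g0 /dd_omega_eq min_omega /(diagm_mul_eq0 _ b_neq0) gt0].
  move=> p' q' omega' theta'.
  have := (sep_quad_minP _ c_gt0 p).2 min_p p'.
  have := (sep_quad_minP _ dd_gt0 omega).2 min_omega omega'.
  have := (dotv_minP _ q).2 g0 q'.
  have := (dotv_maxP _ theta).2 gt0 theta'.
  rewrite !Lagr_primalE; lra.
Qed.

Lemma Lagr_dual_maxP p q omega theta alpha lam eta nu : nonnegv eta ->
  (forall alpha' lam' eta' nu', nonnegv eta' ->
      L p q omega theta alpha' lam' eta' nu' <= L p q omega theta alpha lam eta nu)
  <-> kkt_feasible p q omega theta eta.
Proof.
move=> eta_ge0; rewrite /Lagr.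
set r := q - d - _ - _; set y := H^T *m _ - F; set s := sumv (q - d).
split => [max_L | [/subr_eq0P qp0 r0 s0 cs] alpha' lam' eta' nu' eta'_ge0].
- split.
  + apply/subr_eq0P/(dotv_maxP _ alpha) => alpha'.
    by have := max_L alpha' lam eta nu eta_ge0; lra.
  + apply/(dotv_maxP _ nu) => nu'.
    by have := max_L alpha lam eta nu' eta_ge0; lra.
  + have : s ^+ 2 <= 0 by have := max_L alpha (lam - s) eta nu eta_ge0; rewrite expr2; lra.
    by rewrite le_eqVlt ltNge sqr_ge0 orbF sqrf_eq0 => /eqP.
  + apply/(nonneg_dotv_maxP _ eta_ge0) => eta' eta'_ge0.
    by have := max_L alpha lam eta' nu eta'_ge0; lra.
  have := (nonneg_dotv_maxP _ eta_ge0).2 cs eta' eta'_ge0.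
  rewrite /r /y /s r0 qp0 s0 !dotv0r; lra.
Qed.

Lemma optimal_primal_dualP p q omega theta alpha lam eta nu : nonnegv eta ->
  optimal_primal_dual C b dd H c cbar d F p q omega theta alpha lam eta nu
  <-> kkt_stationary p omega alpha lam eta nu /\ kkt_feasible p q omega theta eta.
Proof.
move=> eta_ge0; have dual_maxP := Lagr_dual_maxP p q omega theta alpha lam nu eta_ge0.
split => [[_ min_L max_L] | [stat feas]].
  by split; [apply/Lagr_primal_minP | apply/dual_maxP].
by split; [ | apply/Lagr_primal_minP | apply/dual_maxP].
Qed.

End Planner.

Lemma equilibrium_kktP (R : realFieldType) (n m : nat) (C : 'M[R]_(n, m)) (b : 'I_m -> R)
    (dd mm : 'I_n -> R) (H : 'M[R]_(n, m + m)) (c cbar : 'I_n -> R) (rho : R)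
    (tq tau : 'I_n -> R) (tl : R) (te : 'I_(m + m) -> R) (d : 'cV[R]_n) (F : 'cV[R]_(m + m))
    (qhat : 'cV[R]_n) (theta : 'cV[R]_m) (lam : R) (omega alpha : 'cV[R]_n)
    (eta : 'cV[R]_(m + m)) :
  (forall j, c j != 0) -> (forall j, mm j != 0) -> (forall j, tq j != 0) ->
  (forall j, tau j != 0) -> tl != 0 -> (forall e, te e != 0) -> nonnegv eta ->
  let pi := price_of H lam eta omega in
  let q := q_of rho pi alpha qhat in
  let p : 'cV[R]_n := \col_j ((pi j 0 - cbar j) / c j) in
  is_equilibrium C b dd mm H c cbar rho tq tau tl te d F qhat theta lam omega alpha eta
  <-> kkt_stationary C c cbar H p omega alpha lam eta omega
      /\ kkt_feasible C b dd H d F p q omega theta eta.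
Proof.
move=> c_neq0 mm_neq0 tq_neq0 tau_neq0 tl_neq0 te_neq0 eta_ge0 pi q p.
have alpha_dot_eq0 : \col_j ((q j 0 - (pi j 0 - cbar j) / c j) / tau j) = 0 <-> q = p.
  rewrite (_ : \col_j _ = \col_j ((q - p) j 0 / tau j)); last first.
    by apply/matrixP => i j; rewrite !mxE.
  exact: iff_trans (col_div_eq0 _ tau_neq0) (subr_eq0P _ _).
have lam_dot_eq0 : - sumv (q - d) / tl = 0 <-> sumv (q - d) = 0.
  split => [/eqP | ->]; last by rewrite oppr0 mul0r.
  by rewrite mulf_eq0 invr_eq0 (negbTE tl_neq0) orbF oppr_eq0 => /eqP.
have eta_dot_eq0 y : \col_e ((projp y eta) e 0 / te e) = 0 <-> complementary y eta.
  exact: iff_trans (col_div_eq0 _ te_neq0) (projp_eq0P _ eta_ge0).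
split.
- case=> [th0 /(col_div_eq0 _ mm_neq0) r0 /alpha_dot_eq0 qp].
  case=> /(col_div_eq0 _ tq_neq0) /subr_eq0P pa [/lam_dot_eq0 s0 /eta_dot_eq0 cs].
  by split; split => // j; rewrite mxE -pa mulrC divfK.
- case=> [[_ ap _ th0] [qp r0 s0 cs]].
  split => //; first exact/(col_div_eq0 _ mm_neq0).
  + exact/alpha_dot_eq0.
  + by apply/(col_div_eq0 _ tq_neq0)/subr_eq0P.
  + by split; [apply/lam_dot_eq0 | apply/eta_dot_eq0].
Qed.

Theorem theorem4 (R : realFieldType) (n m : nat) (src dst : 'I_m -> 'I_n)
  (Hloop : forall e, src e != dst e)
  (Hconn : graph_connected src dst)
  (b : 'I_m -> R) (Hb : forall e, 0 < b e)
  (dd : 'I_n -> R) (Hdd : forall j, 0 < dd j)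
  (mm : 'I_n -> R) (Hmm : forall j, 0 < mm j)
  (tq : 'I_n -> R) (Htq : forall j, 0 < tq j)
  (tl : R) (Htl : 0 < tl)
  (te : 'I_(m + m) -> R) (Hte : forall e, 0 < te e)
  (tau : 'I_n -> R) (Htau : forall j, 0 < tau j)
  (c cbar : 'I_n -> R) (Hc : forall j, 0 < c j)
  (rho : R) (Hrho : 0 < rho)
  (Ldag : 'M[R]_n)
  (HLdag : is_MP_inverse (incidence R src dst *m diagm b *m (incidence R src dst)^T) Ldag)
  (Fbar Funder : 'cV[R]_m) (d : 'cV[R]_n) :
  let C := incidence R src dst in
  let H := Hmat C b Ldag in
  let F := col_mx Fbar (- Funder) in
  forall (qhat : 'cV[R]_n) (theta : 'cV[R]_m)
         (lam : R) (omega alpha : 'cV[R]_n) (eta : 'cV[R]_(m + m)),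
  nonnegv eta ->
  let pi := price_of H lam eta omega in
  let q := q_of rho pi alpha qhat in
  let p : 'cV[R]_n := \col_j ((pi j 0 - cbar j) / c j) in
  is_equilibrium C b dd mm H c cbar rho tq tau tl te d F qhat theta lam omega alpha eta
  <-> optimal_primal_dual C b dd H c cbar d F p q omega theta alpha lam eta omega.
Proof.
move=> C H F qhat theta lam omega alpha eta eta_ge0 pi q p.
apply: (iff_trans _ (iff_sym (optimal_primal_dualP C cbar H d F Hb Hdd Hc
  p q omega theta alpha lam omega eta_ge0))).
apply: equilibrium_kktP => // [j | j | j | j | | e]; exact: lt0r_neq0.
Qed.
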